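(* Let $\eta>0$, $\beta\in\mathbb{R}$, and let $\widehat{\mathcal{L}}\in\mathbb{R}^{N\times N}$ satisfy $\langle\widehat{\mathcal{L}}\mathbf{x},\mathbf{x}\rangle\le0$ for all $\mathbf{x}\in\mathbb{R}^N$. For $\gamma>0$ define $$\mathcal{P}_\gamma:=\left[(\eta^2+\beta^2)I-2\eta\widehat{\mathcal{L}}+\widehat{\mathcal{L}}^2\right](\eta I-\widehat{\mathcal{L}})^{-1}(\gamma I-\widehat{\mathcal{L}})^{-1}.$$ With $\gamma_*:=\eta+\frac{\beta^2}{\eta}$, the two-norm condition number satisfies $$\kappa(\mathcal{P}_{\gamma_*})\le 1+\frac{\beta^2}{2\eta^2}.$$
   Context: $\langle\cdot,\cdot\rangle$ is the Euclidean inner product on $\mathbb{R}^N$; $\kappa(A)=\|A\|\,\|A^{-1}\|$ with the operator two-norm. $\mathcal{P}_\gamma$ is the Schur complement $\eta I-\widehat{\mathcal{L}}+\beta^2(\eta I-\widehat{\mathcal{L}})^{-1}$ right-preconditioned by $(\gamma I-\widehat{\mathcal{L}})^{-1}$. *)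

From HB Require Import structures.
From mathcomp Require Import all_boot all_order all_algebra.
From mathcomp Require Import boolp classical_sets reals.
Set Implicit Arguments. Unset Strict Implicit. Unset Printing Implicit Defensive.
Import Order.TTheory GRing.Theory Num.Theory.
Local Open Scope ring_scope.
Local Open Scope classical_set_scope.

Definition dotv (R : realType) (n : nat) (x y : 'cV[R]_n) : R :=
  \sum_(i < n) x i 0 * y i 0.

Definition vnorm (R : realType) (n : nat) (x : 'cV[R]_n) : R :=
  Num.sqrt (dotv x x).

Definition opnorm (R : realType) (n : nat) (A : 'M[R]_n) : R :=
  sup [set vnorm (A *m x) | x in [set x : 'cV[R]_n | vnorm x <= 1]].

Definition cond2 (R : realType) (n : nat) (A : 'M[R]_n) : R :=
  opnorm A * opnorm (invmx A).

Definition Pgamma (R : realType) (n : nat) (eta beta gamma : R) (L : 'M[R]_n)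
  : 'M[R]_n :=
  ((eta ^+ 2 + beta ^+ 2)%:M - (2 * eta) *: L + L *m L)
    *m invmx (eta%:M - L) *m invmx (gamma%:M - L).

From HB Require Import structures.
From mathcomp Require Import all_boot all_order all_algebra.
From mathcomp Require Import boolp classical_sets reals.
From mathcomp Require Import ring lra.
Set Implicit Arguments. Unset Strict Implicit. Unset Printing Implicit Defensive.
Import Order.TTheory GRing.Theory Num.Theory.
Local Open Scope ring_scope.

(* Write A = eta I - L, D = gamma_* I - L, c = beta^2/eta and
   M = (eta^2 + beta^2) I - 2 eta L + L^2, so that P = M A^-1 D^-1.
   Every x is x = D A u with P x = M u, and since beta^2 = c eta one has the
   identity D A = M - c L.  Hence kappa(P) <= K as soon as, for every u,
       |M u|^2 <= |(M - c L) u|^2 <= K^2 |M u|^2,   K = 1 + c/(2 eta),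
   which bounds |P| by 1 and |P^-1| by K.  Both inequalities follow from the
   dissipativity <L v, v> <= 0, used through <(a I + L^2) u, L u> <= 0 (a >= 0):
   - the first one because <M u, L u> <= 0;
   - the second one because M u = w - 2 eta L u with w = (a I + L^2) u,
     which gives |M u|^2 >= 4 eta^2 |L u|^2 and controls the c L u term. *)

Section InnerProduct.
Local Open Scope classical_set_scope.
Variables (R : realType) (n : nat).
Implicit Types (x y z : 'cV[R]_n) (A : 'M[R]_n).

Lemma dotvC x y : dotv x y = dotv y x.
Proof. by rewrite /dotv; apply: eq_bigr => i _; rewrite mulrC. Qed.

Lemma dotvDl x y z : dotv (x + y) z = dotv x z + dotv y z.
Proof. by rewrite /dotv -big_split; apply: eq_bigr => i _; rewrite mxE mulrDl. Qed.

Lemma dotvZl (a : R) x y : dotv (a *: x) y = a * dotv x y.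
Proof. by rewrite /dotv mulr_sumr; apply: eq_bigr => i _; rewrite mxE mulrA. Qed.

Lemma dotv0l y : dotv 0 y = 0.
Proof. by rewrite -(scale0r 0) dotvZl mul0r. Qed.

Lemma dotv_ge0 x : 0 <= dotv x x.
Proof. by apply: sumr_ge0 => i _; rewrite -expr2 sqr_ge0. Qed.

Lemma dotv_le0_eq0 x : dotv x x <= 0 -> x = 0.
Proof.
move=> x_le0; have x_eq0 : dotv x x = 0 by apply/eqP; rewrite eq_le x_le0 dotv_ge0.
apply/matrixP => i j; rewrite (ord1 j) mxE.
have sq_ge0 (k : 'I_n) : xpredT k -> 0 <= x k 0 * x k 0.
  by move=> _; rewrite -expr2 sqr_ge0.
move: (@psumr_eq0P R _ xpredT (fun k => x k 0 * x k 0) sq_ge0 x_eq0 i isT) => /eqP.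
by rewrite mulf_eq0 orbb => /eqP.
Qed.

Lemma dotv_sqrB x y (a : R) :
  dotv (x - a *: y) (x - a *: y)
  = dotv x x - 2 * a * dotv x y + a ^+ 2 * dotv y y.
Proof.
rewrite -scaleNr !dotvDl !(dotvC _ (x + _)) !dotvDl !dotvZl.
by rewrite !(dotvC _ (- a *: y)) !dotvZl (dotvC y x); ring.
Qed.

Lemma unitmx_of_ker A : (forall x, A *m x = 0 -> x = 0) -> A \in unitmx.
Proof.
move=> ker0; rewrite unitmxE unitfE -det_tr; apply/negP => /det0P [v v_neq0 vA0].
have : A *m v^T = 0 by rewrite -(trmxK A) -trmx_mul vA0 trmx0.
by move=> /ker0 /(congr1 trmx); rewrite trmxK trmx0 => v0; rewrite v0 eqxx in v_neq0.
Qed.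

Lemma vnorm_le x y (K : R) :
  0 <= K -> dotv x x <= K ^+ 2 * dotv y y -> vnorm x <= K * vnorm y.
Proof.
move=> K_ge0 le_xy; rewrite /vnorm -(ger0_norm K_ge0) -sqrtr_sqr -sqrtrM ?sqr_ge0 //.
by rewrite ler_sqrt // mulr_ge0 ?sqr_ge0 ?dotv_ge0.
Qed.

Lemma opnorm_le A (K : R) :
  0 <= K -> (forall x, vnorm (A *m x) <= K * vnorm x) -> 0 <= opnorm A <= K.
Proof.
move=> K_ge0 bound.
set S := [set vnorm (A *m x) | x in [set x : 'cV[R]_n | vnorm x <= 1]].
have vnorm0 : vnorm (0 : 'cV[R]_n) = 0 by rewrite /vnorm dotv0l sqrtr0.
have S0 : S 0 by exists 0; rewrite /= ?vnorm0 ?ler01 ?mulmx0.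
have S_ub : ubound S K.
  move=> r [x x_le1 <-]; apply: le_trans (bound x) _.
  by rewrite -[leRHS]mulr1 ler_wpM2l.
apply/andP; split; last by apply: ge_sup => //; exists 0.
by apply: sup_upper_bound => //; split; [exists 0 | exists K].
Qed.

Lemma cond2_le (P : 'M[R]_n) (K : R) : 0 <= K ->
  (forall x, dotv (P *m x) (P *m x) <= dotv x x <= K ^+ 2 * dotv (P *m x) (P *m x)) ->
  cond2 P <= K.
Proof.
move=> K_ge0 bounds.
have P_unit : P \in unitmx.
  apply: unitmx_of_ker => x Px0; apply: dotv_le0_eq0.
  by have /andP[_] := bounds x; rewrite Px0 dotv0l mulr0.
have /andP[P_ge0 P_le1] : 0 <= opnorm P <= 1.
  apply: opnorm_le => // x; apply: vnorm_le => //.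
  by rewrite expr1n mul1r; case/andP: (bounds x).
have /andP[Pinv_ge0 Pinv_leK] : 0 <= opnorm (invmx P) <= K.
  apply: opnorm_le => // y; apply: vnorm_le => //.
  by have /andP[_] := bounds (invmx P *m y); rewrite mulKVmx.
by rewrite /cond2 -[leRHS]mul1r; apply: ler_pM.
Qed.

End InnerProduct.

Section Dissipative.
Variables (R : realType) (n : nat) (L : 'M[R]_n).
Hypothesis L_diss : forall x : 'cV[R]_n, dotv (L *m x) x <= 0.

(* t I - L is invertible for t > 0: (t I - L) x = 0 forces t |x|^2 <= 0. *)
Lemma shift_unitmx (t : R) : 0 < t -> t%:M - L \in unitmx.
Proof.
move=> t_gt0; apply: unitmx_of_ker => x.
rewrite mulmxBl mul_scalar_mx => /eqP; rewrite subr_eq0 => /eqP tx_eq.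
by apply: dotv_le0_eq0; have := L_diss x; rewrite -tx_eq dotvZl pmulr_rle0.
Qed.

Lemma dotv_shift_sqr_le0 (a : R) (u : 'cV[R]_n) : 0 <= a ->
  dotv (a *: u + L *m (L *m u)) (L *m u) <= 0.
Proof.
move=> a_ge0; rewrite dotvDl dotvZl dotvC -[leRHS](addr0 0).
by rewrite lerD ?mulr_ge0_le0 ?L_diss.
Qed.

End Dissipative.

Lemma lower_bound_scalar (R : realFieldType) (e c W p l m : R) :
  0 < e -> 0 <= c -> 0 <= W -> 0 <= p -> 0 <= l ->
  m = W + 4 * e * p + 4 * e ^+ 2 * l ->
  m + 2 * c * (p + 2 * e * l) + c ^+ 2 * l <= (1 + c / (2 * e)) ^+ 2 * m.
Proof.
move=> e_gt0 c_ge0 W_ge0 p_ge0 l_ge0 ->; set k := c / (2 * e).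
have k_ge0 : 0 <= k by rewrite divr_ge0 // mulr_ge0 // ltW.
have -> : c = 2 * e * k by rewrite /k mulrC divfK // mulf_neq0 // gt_eqF.
rewrite -subr_ge0.
have -> : (1 + k) ^+ 2 * (W + 4 * e * p + 4 * e ^+ 2 * l)
          - (W + 4 * e * p + 4 * e ^+ 2 * l + 2 * (2 * e * k) * (p + 2 * e * l)
             + (2 * e * k) ^+ 2 * l)
          = (2 * k + k ^+ 2) * W + 4 * e * (k + k ^+ 2) * p by ring.
by apply: addr_ge0; apply: mulr_ge0; nra.
Qed.

Section PreconditionerBounds.
Variables (R : realType) (n : nat) (L : 'M[R]_n) (eta beta : R).
Hypothesis L_diss : forall x : 'cV[R]_n, dotv (L *m x) x <= 0.
Hypothesis eta_gt0 : 0 < eta.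

Let M := (eta ^+ 2 + beta ^+ 2)%:M - (2 * eta) *: L + L *m L.
Let c := beta ^+ 2 / eta.
Let Q := ((eta + c)%:M - L) *m (eta%:M - L).
Let w (u : 'cV[R]_n) := (eta ^+ 2 + beta ^+ 2) *: u + L *m (L *m u).

Let c_ge0 : 0 <= c.
Proof. by rewrite divr_ge0 ?sqr_ge0 ?ltW. Qed.

Let M_apply (u : 'cV[R]_n) : M *m u = w u - (2 * eta) *: (L *m u).
Proof.
rewrite /M /w !mulmxDl mulNmx mul_scalar_mx -scalemxAl -mulmxA.
by rewrite addrAC.
Qed.

(* Since beta^2 = c eta, (gamma_* I - L)(eta I - L) = M - c L. *)
Let Q_apply (u : 'cV[R]_n) : Q *m u = M *m u - c *: (L *m u).
Proof.
have beta2 : beta ^+ 2 = c * eta by rewrite /c divfK ?gt_eqF.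
rewrite M_apply /w /Q -mulmxA !mulmxBl !mul_scalar_mx !mulmxBr -!scalemxAr beta2.
move: (L *m u) (L *m (L *m u)) => p q.
by apply/matrixP => i j; rewrite !mxE; ring.
Qed.

Let w_L_le0 (u : 'cV[R]_n) : dotv (w u) (L *m u) <= 0.
Proof. by apply: dotv_shift_sqr_le0; rewrite // addr_ge0 ?sqr_ge0. Qed.

(* <M u, L u> = <w, L u> - 2 eta |L u|^2 <= 0. *)
Let M_L_le0 (u : 'cV[R]_n) : dotv (M *m u) (L *m u) <= 0.
Proof.
rewrite M_apply -scaleNr dotvDl dotvZl -[leRHS](addr0 0) lerD //.
by rewrite mulNr oppr_le0 mulr_ge0 ?dotv_ge0 // mulr_ge0 // ltW.
Qed.

(* |M u|^2 <= |(M - c L) u|^2 <= (1 + beta^2 / (2 eta^2))^2 |M u|^2; the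
   second bound uses |M u|^2 = |w u|^2 + 4 eta p + 4 eta^2 |L u|^2 with
   p = - <w u, L u> >= 0, and note c / (2 eta) = beta^2 / (2 eta^2). *)
Lemma numerator_factor_bounds (u : 'cV[R]_n) :
  dotv (M *m u) (M *m u) <= dotv (Q *m u) (Q *m u)
  <= (1 + beta ^+ 2 / (2 * eta ^+ 2)) ^+ 2 * dotv (M *m u) (M *m u).
Proof.
have -> : beta ^+ 2 / (2 * eta ^+ 2) = c / (2 * eta).
  by rewrite /c; field; rewrite gt_eqF.
set p := - dotv (w u) (L *m u); set l := dotv (L *m u) (L *m u).
have M_sqr : dotv (M *m u) (M *m u) = dotv (w u) (w u) + 4 * eta * p + 4 * eta ^+ 2 * l.
  by rewrite M_apply dotv_sqrB /p /l; ring.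
have M_L : dotv (M *m u) (L *m u) = - (p + 2 * eta * l).
  by rewrite M_apply -scaleNr dotvDl dotvZl /p /l; ring.
rewrite Q_apply dotv_sqrB; apply/andP; split.
  rewrite -addrA lerDl addr_ge0 //; last by rewrite mulr_ge0 ?sqr_ge0 ?dotv_ge0.
  by rewrite oppr_ge0 mulr_ge0_le0 // mulr_ge0.
rewrite M_L.
have -> : forall m : R, m - 2 * c * - (p + 2 * eta * l) + c ^+ 2 * l
                        = m + 2 * c * (p + 2 * eta * l) + c ^+ 2 * l.
  by move=> m; ring.
apply: lower_bound_scalar M_sqr; rewrite ?dotv_ge0 //.
by rewrite /p oppr_ge0.
Qed.

End PreconditionerBounds.

Theorem corollary2 (R : realType) (N : nat) (eta beta : R) (L : 'M[R]_N) :
  0 < eta ->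
  (forall x : 'cV[R]_N, dotv (L *m x) x <= 0) ->
  cond2 (Pgamma eta beta (eta + beta ^+ 2 / eta) L)
    <= 1 + beta ^+ 2 / (2 * eta ^+ 2).
Proof.
move=> eta_gt0 L_diss.
set gamma := eta + beta ^+ 2 / eta.
have gamma_gt0 : 0 < gamma by rewrite ltr_wpDr // divr_ge0 ?sqr_ge0 ?ltW.
have A_unit := shift_unitmx L_diss eta_gt0.
have D_unit := shift_unitmx L_diss gamma_gt0.
apply: cond2_le; first by rewrite addr_ge0 // divr_ge0 ?sqr_ge0 // mulr_ge0 ?sqr_ge0.
(* Each x equals (D A) u with P x = M u, where u = A^-1 D^-1 x. *)
move=> x; set u := invmx (eta%:M - L) *m (invmx (gamma%:M - L) *m x).
have x_eq : x = ((gamma%:M - L) *m (eta%:M - L)) *m u.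
  by rewrite -mulmxA /u mulKVmx // mulKVmx.
have Px_eq : Pgamma eta beta gamma L *m x
             = ((eta ^+ 2 + beta ^+ 2)%:M - (2 * eta) *: L + L *m L) *m u.
  by rewrite /Pgamma /u !mulmxA.
by rewrite Px_eq x_eq; apply: numerator_factor_bounds.
Qed.
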